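(* Let $C_n(a,b)$ be a connected $2$-regular circulant digraph, and let $l\ge1$, $0\le k\le l$ with $la+k(b-a)=\omega n$ for a positive integer $\omega$. Then for each $p\in\mathcal{P}_{l,k}(C_n(a,b))$ there exist a positive integer $q$ with $q\mid\gcd(l,k)$ and $\gcd(q,\omega)=1$, a word $w\in\mathbb{L}_2^q(l,k)$, and a vertex $v$ such that $p=\varphi(w,v)$.
   Context: Let $n\ge 2$ and $0<a<b<n$ be integers with $\gcd(n,a,b)=1$. $C_n(a,b)$ has vertex set $\mathbb{Z}_n$ and directed bonds $(v,v+a)$, $(v,v+b)$ (addition mod $n$), with step sizes $a$, $b$. A path of length $l$ is a sequence of bonds $(e_1,\dots,e_l)$ with the terminus of $e_j$ equal to the origin of $e_{j+1}$; its $b$-count is the number of bonds of step size $b$; its step sequence is the sequence of step sizes; a circuit is a path whose last terminus equals its first origin. A periodic orbit is an equivalence class of circuits under cyclic rotation; it is primitive if it is not $[c_0^r]$ for a circuit $c_0$ and $r>1$ ($c_0^r$ = concatenation of $r$ copies). $\mathcal{P}_{l,k}(C_n(a,b))$ is the set of primitive periodic orbits of length $l$ and $b$-count $k$. Words over $\{a,b\}$ are ordered lexicographically with $a\prec b$; a word is Lyndon if strictly smaller than all its nontrivial cyclic rotations; $\mathbb{L}_2(l,k)$ is the set of Lyndon words of length $l$ with exactly $k$ letters $b$, and for $q\mid\gcd(l,k)$, $\mathbb{L}_2^q(l,k)=\{x^q: x\in\mathbb{L}_2(l/q,k/q)\}$. Identifying letters $a,b$ with step sizes $a,b$, $\psi(w,v)$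 is the unique path starting at vertex $v$ with step sequence $w$; when it is a circuit, $\varphi(w,v)=[\psi(w,v)]$. *)

From mathcomp Require Import all_boot.
Set Implicit Arguments. Unset Strict Implicit. Unset Printing Implicit Defensive.

(* Since 0 < a < b < n, the two bonds out of a vertex
   are distinct, so the step size of a bond is determined by the bond. *)
Definition bond := (nat * nat)%type.

Definition is_bond (n a b : nat) (e : bond) : Prop :=
  e.1 < n /\ (e.2 = (e.1 + a) %% n \/ e.2 = (e.1 + b) %% n).

Definition is_b_bond (n b : nat) (e : bond) : bool := e.2 == (e.1 + b) %% n.

Fixpoint chained (c : seq bond) : Prop :=
  match c with
  | e1 :: ((e2 :: _) as c') => e1.2 = e2.1 /\ chained c'
  | _ => True
  end.

Definition is_path (n a b : nat) (c : seq bond) : Prop :=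
  (forall e, e \in c -> is_bond n a b e) /\ chained c.

Definition is_circuit (n a b : nat) (c : seq bond) : Prop :=
  c <> [::] /\ is_path n a b c /\ (last (0, 0) c).2 = (head (0, 0) c).1.

Definition bcount (n b : nat) (c : seq bond) : nat := count (is_b_bond n b) c.

Definition rot_class (c : seq bond) : seq bond -> Prop :=
  fun c' => exists i, c' = rot i c.

Definition periodic_orbit (n a b : nat) (p : seq bond -> Prop) : Prop :=
  exists c, is_circuit n a b c /\ p = rot_class c.

Definition primitive_orbit (n a b : nat) (p : seq bond -> Prop) : Prop :=
  ~ exists c0 r, is_circuit n a b c0 /\ 1 < r /\ p = rot_class (flatten (nseq r c0)).

Definition in_P (n a b l k : nat) (p : seq bond -> Prop) : Prop :=
  (exists c, is_circuit n a b c /\ p = rot_class c /\ size c = l /\ bcount n b c = k)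
  /\ primitive_orbit n a b p.

Inductive letter := La | Lb.

Definition letter_lt (x y : letter) : bool :=
  match x, y with La, Lb => true | _, _ => false end.

Definition letter_eqb (x y : letter) : bool :=
  match x, y with La, La | Lb, Lb => true | _, _ => false end.

Fixpoint lex_lt (u v : seq letter) : bool :=
  match u, v with
  | [::], [::] => false
  | [::], _ :: _ => true
  | _ :: _, [::] => false
  | x :: u', y :: v' => letter_lt x y || (letter_eqb x y && lex_lt u' v')
  end.

Definition lyndon (w : seq letter) : Prop :=
  w <> [::] /\ forall i, 0 < i < size w -> lex_lt w (rot i w).

Definition countb (w : seq letter) : nat :=
  count (fun x => letter_eqb x Lb) w.

Definition inL2 (l k : nat) (w : seq letter) : Prop :=
  size w = l /\ countb w = k /\ lyndon w.

Definition inL2q (q l k : nat) (w : seq letter) : Prop :=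
  exists x, inL2 (l %/ q) (k %/ q) x /\ w = flatten (nseq q x).

Definition step (a b : nat) (x : letter) : nat :=
  match x with La => a | Lb => b end.

Fixpoint psi (n a b : nat) (w : seq letter) (v : nat) : seq bond :=
  match w with
  | [::] => [::]
  | x :: w' => (v, (v + step a b x) %% n) :: psi n a b w' ((v + step a b x) %% n)
  end.

(* Read a circuit c of [p] as psi(s, v0), s its step sequence.  Among the
   rotations of s take one, rot j s, that is least for the lexicographic order;
   with m its least rotation period it equals x^q for x its prefix of length m
   and q = l / m, and x is Lyndon because rot j s is least and m is least.  The
   matching rotation of c is psi(x^q, v) for a vertex v and lies in [p].  If
   d = gcd(q, omega) > 1, the steps of y = x^(q/d) add up to (omega/d) n, so
   psi(y, v) is already a circuit and [p] = [psi(y, v)^d], against primitivity. *)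

From HB Require Import structures.
From mathcomp Require Import all_boot zify.
From Stdlib Require Import FunctionalExtensionality PropExtensionality.

Set Implicit Arguments.
Unset Strict Implicit.
Unset Printing Implicit Defensive.

Lemma letter_eqP : Equality.axiom letter_eqb.
Proof. by case; case; constructor. Qed.
HB.instance Definition _ := hasDecEq.Build letter letter_eqP.

Local Notation seqpow s q := (flatten (nseq q s)).

Section SeqPow.
Context {T : Type}.
Implicit Types s u v : seq T.

Lemma size_seqpow s q : size (seqpow s q) = q * size s.
Proof. by rewrite size_flatten /shape map_nseq sumn_nseq mulnC. Qed.

Lemma count_seqpow (P : pred T) s q : count P (seqpow s q) = q * count P s.
Proof. by rewrite count_flatten map_nseq sumn_nseq mulnC. Qed.

Lemma seqpowD s i j : seqpow s (i + j) = seqpow s i ++ seqpow s j.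
Proof. by rewrite nseqD flatten_cat. Qed.

Lemma seqpowM s i j : seqpow s (i * j) = seqpow (seqpow s j) i.
Proof. by elim: i => //= i IH; rewrite mulSn seqpowD IH. Qed.

Lemma seqpow_conj u v q : u ++ seqpow (v ++ u) q = seqpow (u ++ v) q ++ u.
Proof. by elim: q => [|q IH] /=; rewrite ?cats0 // -!catA IH. Qed.

Lemma rot_seqpow i s q : i <= size s -> rot i (seqpow s q) = seqpow (rot i s) q.
Proof.
move=> le_i_s; case: q => [|q]; first by rewrite rot_oversize.
rewrite -(cat_take_drop i s) /= -catA.
have sz_take : size (take i s) = i by rewrite size_takel.
by rewrite /rot !take_size_cat // !drop_size_cat // -catA -seqpow_conj catA.
Qed.

(* No bound on c is needed: rot is the identity beyond size s. *)
Lemma rot_period_mul m c s : rot m s = s -> rot (c * m) s = s.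
Proof.
move=> per; elim: c => [|c IH]; first by rewrite rot0.
case: (leqP (c.+1 * m) (size s)) => [le|/ltnW/rot_oversize //].
by rewrite mulSn rotD // IH per.
Qed.

Lemma rot_period_mod m s : rot m s = s -> rot (size s %% m) s = s.
Proof.
move=> per; have split_size := divn_eq (size s) m.
rewrite -{2}(rot_period_mul (size s %/ m) per) -rotD; last by lia.
by rewrite addnC -split_size rot_size.
Qed.

Lemma take_rot_period m c s : rot m s = s -> c * m <= size s ->
  take (c * m) s = seqpow (take m s) c.
Proof.
move=> per; elim: c => [|c IH] le; first by rewrite take0.
rewrite mulSn addnC takeD IH; last by rewrite mulSn in le; lia.
rewrite -addn1 seqpowD /= cats0; congr (_ ++ _).
rewrite -{2}(rot_period_mul c per) /rot takel_cat // size_drop.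
by rewrite mulSn in le; lia.
Qed.

Lemma count_rot (P : pred T) i s : count P (rot i s) = count P s.
Proof. by rewrite /rot count_cat addnC -count_cat cat_take_drop. Qed.

End SeqPow.

(* Turns lex_lt on words of equal length into < on nat, see [lex_ltE]. *)
Fixpoint bincode (w : seq letter) : nat :=
  if w is x :: w' then (if x is Lb then 2 ^ size w' else 0) + bincode w' else 0.

Lemma bincode_lt w : bincode w < 2 ^ size w.
Proof. by elim: w => [|[] w IH] //=; rewrite expnS; lia. Qed.

Lemma bincode_cat u v : bincode (u ++ v) = bincode u * 2 ^ size v + bincode v.
Proof.
elim: u => [|[] u IH] //=; rewrite IH size_cat expnD; lia.
Qed.

Lemma lex_ltE u v : size u = size v -> lex_lt u v = (bincode u < bincode v).
Proof.
elim: u v => [|x u IH] [|y v] //= [sz]; rewrite IH //.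
have := bincode_lt u; have := bincode_lt v; rewrite sz.
case: x; case: y => /= hv hu; apply/idP/idP; lia.
Qed.

Lemma bincode_inj {u v} : size u = size v -> bincode u = bincode v -> u = v.
Proof.
elim: u v => [|x u IH] [|y v] //= [sz] eq_code.
have hu := bincode_lt u; have hv := bincode_lt v; rewrite sz in eq_code hu.
have eq_xy : x = y by case: x eq_code; case: y => //= eq_code; lia.
by rewrite eq_xy (IH v) //; case: y eq_xy eq_code => -> /=; lia.
Qed.

Lemma ltn_bincode_seqpow {q u v} : 0 < q -> size u = size v ->
  bincode u < bincode v -> bincode (seqpow u q) < bincode (seqpow v q).
Proof.
case: q => [//|q] _ sz lt_uv /=; rewrite !bincode_cat !size_seqpow sz.
have := bincode_lt (seqpow u q); have := bincode_lt (seqpow v q).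
rewrite !size_seqpow sz; nia.
Qed.

Lemma exists_min_rot (s : seq letter) :
  exists2 j, j <= size s & forall i, bincode (rot j s) <= bincode (rot i (rot j s)).
Proof.
case: (@arg_minnP _ ord0 xpredT (fun i : 'I_(size s).+1 => bincode (rot i s)) isT).
move=> j _ j_min; exists j; first by rewrite -ltnS.
move=> i; rewrite rot_rot_add.
by apply: (j_min (Ordinal (leq_ltn_trans (leq_rot_add j i s) (ltnSn _)))).
Qed.

Lemma lyndon_root (t : seq letter) : t <> [::] ->
  (forall i, bincode t <= bincode (rot i t)) ->
  exists2 q, 0 < q & exists2 x, t = seqpow x q & lyndon x.
Proof.
move=> t_ne t_min; have t_gt0 : 0 < size t by case: (t) t_ne.
have period_ex : exists m, (0 < m) && (rot m t == t).
  by exists (size t); rewrite t_gt0 rot_size eqxx.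
case: (ex_minnP period_ex) => m /andP[m_gt0 /eqP per] m_min.
have m_le : m <= size t by apply: m_min; rewrite t_gt0 rot_size eqxx.
have m_dvd : m %| size t.
  rewrite /dvdn; apply/negPn/negP => mod_ne0.
  have := m_min (size t %% m); rewrite lt0n mod_ne0 rot_period_mod // eqxx.
  by rewrite leqNgt ltn_pmod // => /(_ isT).
set x := take m t; set q := size t %/ m.
have size_x : size x = m by rewrite size_takel.
have t_pow : t = seqpow x q.
  by rewrite -take_rot_period ?divnK // take_oversize ?divnK.
have q_gt0 : 0 < q by rewrite divn_gt0.
exists q => //.
exists x => //; split; first by move=> x_nil; move: m_gt0; rewrite -size_x x_nil.
move=> i /andP[i_gt0 i_lt]; rewrite size_x in i_lt.
have i_le : i <= size x by rewrite size_x ltnW.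
have rot_t : rot i t = seqpow (rot i x) q by rewrite {1}t_pow rot_seqpow.
have rot_x_ne : rot i x != x.
  apply/eqP => rot_x; have := m_min i.
  by rewrite i_gt0 rot_t rot_x -t_pow eqxx leqNgt i_lt => /(_ isT).
rewrite lex_ltE ?size_rot //; case: ltngtP => // [lt_code|eq_code].
  have := ltn_bincode_seqpow q_gt0 (size_rot i x) lt_code.
  by rewrite -rot_t -t_pow ltnNge t_min.
by move: rot_x_ne; rewrite (bincode_inj (size_rot i x) (esym eq_code)) eqxx.
Qed.

Lemma rot_lyndon_seqpow (s : seq letter) : s <> [::] ->
  exists2 j, j <= size s &
  exists2 q, 0 < q & exists2 x, rot j s = seqpow x q & lyndon x.
Proof.
move=> s_ne; have [j j_le j_min] := exists_min_rot s.
exists j => //; apply: lyndon_root => //.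
by move=> rot_nil; apply: s_ne; rewrite -(rotK j s) rot_nil.
Qed.

Lemma rot_class_rot j (s : seq bond) : rot_class (rot j s) = rot_class s.
Proof.
apply: functional_extensionality => s'; apply: propositional_extensionality.
split=> [[i ->]|[i ->]]; first by exists (rot_add s j i); rewrite rot_rot_add.
exists (rot_add (rot j s) (size s - j) i).
by rewrite -rot_rot_add -{1}(rotK j s) /rotr size_rot.
Qed.

Section Circulant.
Variables n a b : nat.

Definition step_seq (c : seq bond) : seq letter :=
  map (fun e => if is_b_bond n b e then Lb else La) c.

Definition endpoint (w : seq letter) (v : nat) : nat :=
  foldl (fun u x => (u + step a b x) %% n) v w.

Definition step_sum (w : seq letter) : nat := sumn (map (step a b) w).

Lemma size_psi w v : size (psi n a b w v) = size w.
Proof. by elim: w v => //= x w IH v; rewrite IH. Qed.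

Lemma psi_cat u w v :
  psi n a b (u ++ w) v = psi n a b u v ++ psi n a b w (endpoint u v).
Proof. by elim: u v => //= x u IH v; rewrite IH. Qed.

Lemma endpoint_cat u w v : endpoint (u ++ w) v = endpoint w (endpoint u v).
Proof. exact: foldl_cat. Qed.

Lemma last_psi w v e : e.2 = v -> (last e (psi n a b w v)).2 = endpoint w v.
Proof. by elim: w v e => //= x w IH v e _; apply: IH. Qed.

Lemma endpointE w v : v < n -> endpoint w v = (v + step_sum w) %% n.
Proof.
elim: w v => [|x w IH] v v_lt /=; first by rewrite addn0 modn_small.
rewrite /endpoint /= -/(endpoint w _) IH ?ltn_pmod //; last by case: n v_lt.
by rewrite /step_sum /= modnDml addnA.
Qed.

Lemma step_sumE w : a <= b -> step_sum w = size w * a + countb w * (b - a).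
Proof.
move=> le_ab; elim: w => //= x w IH.
by rewrite /step_sum /countb /= -/(step_sum w) -/(countb w) IH; case: x => /=; nia.
Qed.

Lemma step_sum_cat u w : step_sum (u ++ w) = step_sum u + step_sum w.
Proof. by rewrite /step_sum map_cat sumn_cat. Qed.

Lemma step_sum_seqpow w q : step_sum (seqpow w q) = q * step_sum w.
Proof. by elim: q => //= q IH; rewrite step_sum_cat IH mulSn. Qed.

Lemma countb_step_seq c : countb (step_seq c) = bcount n b c.
Proof. by rewrite /countb /step_seq count_map; apply: eq_count => e /=; case: ifP. Qed.

Lemma psi_bond w v e : v < n -> e \in psi n a b w v -> is_bond n a b e.
Proof.
elim: w v => [//|x w IH] v v_lt /=; rewrite in_cons => /orP[/eqP -> | e_in].
  by split=> //=; case: x; [left|right].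
by apply: (IH _ _ e_in); rewrite ltn_pmod //; case: n v_lt.
Qed.

Lemma chained_psi w v : chained (psi n a b w v).
Proof. by elim: w v => [//|x [//|y w] IH] v /=; split=> //; apply: IH. Qed.

Lemma psi_circuit w v : v < n -> w <> [::] -> endpoint w v = v ->
  is_circuit n a b (psi n a b w v).
Proof.
case: w => [//|x w] v_lt _ loop; split=> //; split; last by rewrite /= last_psi.
by split; [move=> e; apply: psi_bond | apply: chained_psi].
Qed.

Lemma path_psiE c v : is_path n a b c -> (head (v, v) c).1 = v ->
  c = psi n a b (step_seq c) v.
Proof.
elim: c v => [//|[u u'] c IH] v [c_bonds c_chained] /= head_v.
have [_ /= step_u] := c_bonds (u, u') (mem_head _ _).
have u'_eq : u' = (v + step a b (if u' == (u + b) %% n then Lb else La)) %% n.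
  rewrite -head_v; case: eqP => //= /eqP ne.
  by case: step_u => // u'_eq; rewrite u'_eq eqxx in ne.
rewrite /is_b_bond /= -u'_eq -head_v; congr (_ :: _); apply: IH.
- split=> [e e_in|]; first by apply: c_bonds; rewrite in_cons e_in orbT.
  by case: (c) c_chained => // ? ? [].
- by case: (c) c_chained => //= ? ? [].
Qed.

Lemma circuit_psiE c : is_circuit n a b c ->
  exists v, [/\ v < n, c = psi n a b (step_seq c) v & endpoint (step_seq c) v = v].
Proof.
case: c => [[]//|e c] [_ [c_path loop]]; exists e.1.
have e_lt : e.1 < n by case: c_path => /(_ e (mem_head _ _)) [].
have c_eq := @path_psiE (e :: c) e.1 c_path erefl.
split=> //; move: loop; rewrite {1}c_eq /=.
by rewrite last_psi.
Qed.

Lemma psi_seqpow w v q : endpoint w v = v ->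
  psi n a b (seqpow w q) v = seqpow (psi n a b w v) q.
Proof. by move=> loop; elim: q => //= q IH; rewrite psi_cat loop IH. Qed.

Lemma rot_psi j s v : j <= size s -> endpoint s v = v ->
  rot j (psi n a b s v) = psi n a b (rot j s) (endpoint (take j s) v).
Proof.
move=> j_le loop; rewrite -{1}(cat_take_drop j s) psi_cat.
have size_take : size (psi n a b (take j s) v) = j by rewrite size_psi size_takel.
by rewrite -{1}size_take rot_size_cat /rot psi_cat -endpoint_cat cat_take_drop loop.
Qed.

Lemma endpoint_rot j s v : endpoint s v = v ->
  endpoint (rot j s) (endpoint (take j s) v) = endpoint (take j s) v.
Proof.
by move=> loop; rewrite /rot endpoint_cat -(endpoint_cat (take j s)) cat_take_drop loop.
Qed.

Lemma primitive_coprime x q omega v : v < n -> x <> [::] -> 0 < q ->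
  step_sum (seqpow x q) = omega * n ->
  primitive_orbit n a b (rot_class (psi n a b (seqpow x q) v)) -> coprime q omega.
Proof.
move=> v_lt x_ne q_gt0 sum_eq prim; apply: contraT => not_coprime.
set d := gcdn q omega.
have d_gt1 : 1 < d by rewrite ltn_neqAle eq_sym gcdn_gt0 q_gt0 andbT.
have d_q : d %| q := dvdn_gcdl q omega.
have d_omega : d %| omega := dvdn_gcdr q omega.
set y := seqpow x (q %/ d).
have pow_y : seqpow x q = seqpow y d by rewrite /y -seqpowM mulnC divnK.
have sum_y : step_sum y = omega %/ d * n.
  apply/eqP; rewrite -(eqn_pmul2l (ltnW d_gt1)) -step_sum_seqpow -pow_y sum_eq.
  by rewrite -{1}(divnK d_omega) mulnAC mulnC.
have y_loop : endpoint y v = v by rewrite endpointE // sum_y addnC modnMDl modn_small.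
have y_ne : y <> [::].
  have qd_gt0 : 0 < q %/ d by rewrite divn_gt0 ?(ltnW d_gt1) // dvdn_leq.
  move=> y_nil; move: (size_seqpow x (q %/ d)); rewrite -/y y_nil.
  by case: (x) x_ne => // ? ? _ /=; nia.
case: prim; exists (psi n a b y v), d; split; first exact: psi_circuit.
by split=> //; rewrite pow_y psi_seqpow.
Qed.

End Circulant.

Theorem mainTheorem13 (n a b l k omega : nat) :
  2 <= n -> 0 < a -> a < b -> b < n -> gcdn (gcdn n a) b = 1 ->
  1 <= l -> k <= l -> 0 < omega ->
  l * a + k * (b - a) = omega * n ->
  forall p : seq bond -> Prop, in_P n a b l k p ->
  exists q : nat, [/\ 0 < q, q %| gcdn l k & coprime q omega] /\
  exists w : seq letter, inL2q q l k w /\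
  exists v : nat, v < n /\ is_circuit n a b (psi n a b w v) /\
    p = rot_class (psi n a b w v).
Proof.
move=> _ _ lt_ab _ _ l_gt0 _ _ sum_eq p [[c [c_circ [-> [size_c count_c]]]] prim].
have [v0 [v0_lt c_eq c_loop]] := circuit_psiE c_circ.
set s := step_seq n b c in c_eq c_loop.
have size_s : size s = l by rewrite size_map.
have s_ne : s <> [::] by move=> s_nil; move: l_gt0; rewrite -size_s s_nil.
have [j j_le [q q_gt0 [x rot_s x_lyndon]]] := rot_lyndon_seqpow s_ne.
set v := endpoint n a b (take j s) v0.
have v_lt : v < n by rewrite /v endpointE // ltn_pmod //; case: (n) v0_lt.
have p_eq : rot_class c = rot_class (psi n a b (seqpow x q) v).
  by rewrite -rot_s -rot_psi // -c_eq rot_class_rot.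
have w_loop : endpoint n a b (seqpow x q) v = v by rewrite -rot_s endpoint_rot.
have l_eq : l = q * size x by rewrite -size_s -(size_rot j) rot_s size_seqpow.
have k_eq : k = q * countb x.
  rewrite -count_c -countb_step_seq -/s /countb -(count_rot _ j) rot_s.
  by rewrite count_seqpow.
have x_ne : x <> [::] by move=> x_nil; move: l_gt0; rewrite l_eq x_nil muln0.
have w_sum : step_sum a b (seqpow x q) = omega * n.
  rewrite step_sumE ?(ltnW lt_ab) // size_seqpow /countb count_seqpow.
  by rewrite -/(countb x) -l_eq -k_eq.
exists q; split; first split => //.
- by rewrite dvdn_gcd l_eq k_eq !dvdn_mulr.
- by apply: (primitive_coprime v_lt x_ne q_gt0 w_sum); rewrite -p_eq.
exists (seqpow x q); split; first by exists x; rewrite l_eq k_eq !mulKn.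
exists v; split=> //; split=> //; apply: psi_circuit => //.
by rewrite -rot_s => rot_nil; apply: s_ne; rewrite -(rotK j s) rot_nil.
Qed.
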